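(* If a graph $G$ admits a star NeS model, then it admits a star NeS model $(\mathcal{T},(T_v)_{v\in V(G)})$ such that, with $c$ the center of the star $\mathcal{T}$, the set $\{v\in V(G): c\in T_v\}$ is a maximal clique of $G$.
   Context: An embedding tree $\mathcal{T}$ is a tree embedded in the Euclidean plane: each edge is a straight line segment of positive length, segments meet only at common endpoints, and $\mathcal{T}$ is regarded as the set of all points on its segments; $d_{\mathcal{T}}(x,y)$ is the length of the unique path in $\mathcal{T}$ between points $x,y$. A neighborhood subtree of $\mathcal{T}$ with center $c\in\mathcal{T}$ and non-negative rational radius $w$ is $\{p\in\mathcal{T}: d_{\mathcal{T}}(p,c)\le w\}$. A NeS model of a graph $G$ is a pair $(\mathcal{T},(T_v)_{v\in V(G)})$ where each $T_v$ is a neighborhood subtree of $\mathcal{T}$ and for all distinct $u,v$, $uv\in E(G)$ iff $T_u\cap T_v\neq\emptyset$. A star NeS model is a NeS model in which $\mathcal{T}$ is (the embedding of) a star, i.e. a union of line segments $L_1,\dots,L_\beta$ sharing one common endpoint $c$ (the center) and otherwise disjoint. *)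

From mathcomp Require Import all_boot all_order all_algebra.
From mathcomp Require Import reals.
Set Implicit Arguments. Unset Strict Implicit. Unset Printing Implicit Defensive.
Import Order.TTheory GRing.Theory Num.Theory.
Local Open Scope ring_scope.

(* A point is represented as (i, t) with
   0 <= t <= len i: the point of ray L_i at distance t from the center;
   all points (i, 0) represent the center c. *)
Definition in_star (R : realType) (b : nat) (len : 'I_b -> R) (p : 'I_b * R) : Prop :=
  0 <= p.2 /\ p.2 <= len p.1.

Definition star_dist (R : realType) (b : nat) (p q : 'I_b * R) : R :=
  if p.1 == q.1 then `|p.2 - q.2| else p.2 + q.2.

Definition in_nbhd (R : realType) (b : nat) (len : 'I_b -> R)
    (c : 'I_b * R) (w : rat) (p : 'I_b * R) : Prop :=
  in_star len p /\ star_dist p c <= ratr w.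

Definition star_NeS_model (R : realType) (V : finType) (e : rel V)
    (b : nat) (len : 'I_b -> R) (ctr : V -> 'I_b * R) (rad : V -> rat) : Prop :=
  [/\ (0 < b)%N,
      (forall i, 0 < len i),
      (forall v, in_star len (ctr v)),
      (forall v, 0 <= rad v) &
      (forall u v, u != v ->
         (e u v <-> exists p, in_nbhd len (ctr u) (rad u) p /\
                              in_nbhd len (ctr v) (rad v) p))].

Definition has_star_NeS_model (R : realType) (V : finType) (e : rel V) : Prop :=
  exists b (len : 'I_b -> R) ctr rad, star_NeS_model e len ctr rad.

Definition center_in (R : realType) (b : nat) (len : 'I_b -> R)
    (c : 'I_b * R) (w : rat) : Prop :=
  forall i : 'I_b, in_nbhd len c w (i, 0).

Definition is_clique (V : finType) (e : rel V) (K : V -> Prop) : Prop :=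
  forall u v, K u -> K v -> u != v -> e u v.

Definition is_maximal_clique (V : finType) (e : rel V) (K : V -> Prop) : Prop :=
  is_clique e K /\
  (forall K' : V -> Prop, is_clique e K' -> (forall v, K v -> K' v) ->
     forall v, K' v -> K v).

(* Call v central when T_v contains the center c; the central vertices always form a
   clique.  If it is not maximal, some non-central u is adjacent to every central
   vertex; T_u is then a segment [g_u, r_u] of one ray at distance g_u > 0 from c, and
   we take such a u with g_u minimal.  Replace T_u by a ball that covers [0, r_u] on
   its ray and only a segment shorter than every gap g_v on the other rays.  The new
   T_u contains the old one, and every T_y it newly meets was already met: either y is
   central, or T_y lies on u's ray with g_y <= r_u and reaches g_u, since otherwise y
   would also be adjacent to every central vertex (the central subtrees meeting T_u
   pass through T_y on their way to c) with g_y < g_u.  So u becomes central, the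
   others are unchanged, and we conclude by induction on the number of non-central
   vertices. *)

From mathcomp Require Import all_boot all_order all_algebra.
From mathcomp Require Import reals lra.
Set Implicit Arguments. Unset Strict Implicit. Unset Printing Implicit Defensive.
Import Order.TTheory GRing.Theory Num.Theory.
Local Open Scope ring_scope.

Lemma ex_pos_lower_bound (R : realDomainType) (T : finType) (P : pred T) (F : T -> R) :
  (forall x, P x -> 0 < F x) -> exists2 d, 0 < d & forall x, P x -> d <= F x.
Proof.
move=> F_gt0; case: (pickP P) => [x0 Px0|P0]; last by exists 1 => // x; rewrite P0.
by case: (arg_minP F Px0) => x Px x_min; exists (F x); [exact: F_gt0|].
Qed.

Section StarGeometry.
Context {R : realType} {b : nat} {len : 'I_b -> R}.

Lemma in_nbhd_far (c : 'I_b * R) w {p} : ratr w < c.2 ->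
  in_nbhd len c w p <->
  [/\ in_star len p, p.1 = c.1 & c.2 - ratr w <= p.2 <= c.2 + ratr w].
Proof.
case: p c => j s [k t] /= wt; rewrite /in_nbhd /in_star /star_dist /=.
case: eqP => [->|jk]; last by split=> [[[s_ge0 _] st]|[_ /jk []]]; exfalso; lra.
by rewrite ler_norml; split=> [[? ?]|[? _ ?]]; split=> //; lra.
Qed.

Lemma in_nbhd_near (c : 'I_b * R) w {p} : c.2 <= ratr w ->
  in_nbhd len c w p <->
  in_star len p /\ p.2 <= (if p.1 == c.1 then c.2 + ratr w else ratr w - c.2).
Proof.
case: p c => j s [k t] /= tw; rewrite /in_nbhd /in_star /star_dist /=.
case: eqP => _ /=; rewrite ?ler_norml; split=> -[[s_ge0 s_le] st]; split=> //; lra.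
Qed.

Lemma in_nbhd_shrink (c : 'I_b * R) w j s s' : c.2 <= ratr w ->
  in_nbhd len c w (j, s) -> 0 <= s' <= s -> in_nbhd len c w (j, s').
Proof.
move=> cw /(in_nbhd_near cw) [[_ /= s_le] st] /andP[s'_ge0 s'_le].
apply/(in_nbhd_near cw); split; first by rewrite /in_star /=; lra.
by move: st => /=; case: ifP => _; lra.
Qed.

Lemma center_inP (c : 'I_b * R) w : (forall i, 0 <= len i) -> 0 <= c.2 ->
  center_in len c w <-> c.2 <= ratr w.
Proof.
move=> len_ge0 c_ge0; have dist_c i : star_dist (i, 0) c = c.2.
  by rewrite /star_dist /=; case: eqP => _; rewrite ?sub0r ?normrN ?ger0_norm ?add0r.
rewrite /center_in /in_nbhd; split=> [/(_ c.1) [_]|cw i]; rewrite dist_c //.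
Qed.

Lemma in_nbhd_recenter {i : 'I_b} (r : R) (q : rat) {p} : r <= 2 * ratr q ->
  in_nbhd len (i, r - ratr q) q p <->
  in_star len p /\ p.2 <= (if p.1 == i then r else 2 * ratr q - r).
Proof.
move=> rq; rewrite in_nbhd_near /= ?subrK; last lra.
by rewrite (_ : ratr q - (r - ratr q) = 2 * ratr q - r) //; lra.
Qed.

Lemma far_nbhds_meet (c1 c2 : 'I_b * R) (w1 w2 : rat) :
    in_star len c1 -> in_star len c2 -> 0 <= w1 -> 0 <= w2 ->
    ratr w1 < c1.2 -> ratr w2 < c2.2 -> c1.1 = c2.1 ->
    c1.2 - ratr w1 <= c2.2 + ratr w2 -> c2.2 - ratr w2 <= c1.2 + ratr w1 ->
  exists p, in_nbhd len c1 w1 p /\ in_nbhd len c2 w2 p.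
Proof.
case: c1 c2 => [k1 t1] [k2 t2] [_ /= t1_le] [_ /= t2_le] /=.
rewrite -!(ler0q R) => w1_ge0 w2_ge0 w1t1 w2t2 k12 le12 le21; subst k2.
have [le_gap|lt_gap] := lerP (t1 - ratr w1) (t2 - ratr w2).
  exists (k1, t2 - ratr w2).
  by rewrite !in_nbhd_far //= /in_star /=; split; split=> //; lra.
exists (k1, t1 - ratr w1).
by rewrite !in_nbhd_far //= /in_star /=; split; split=> //; lra.
Qed.
End StarGeometry.

Section Centrality.
Variables (R : realType) (V : finType) (e : rel V) (b : nat).
Variables (ctr : V -> 'I_b * R) (rad : V -> rat).

Definition central v := (ctr v).2 <= ratr (rad v).
Definition center_gap v := (ctr v).2 - ratr (rad v).
Definition reach v := (ctr v).2 + ratr (rad v).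
Definition extends_central_clique v := ~~ central v && [forall x, central x ==> e x v].

End Centrality.

Section Recentering.
Variables (R : realType) (V : finType) (e : rel V) (b : nat) (len : 'I_b -> R).
Variables (ctr : V -> 'I_b * R) (rad : V -> rat).

Hypothesis e_sym : symmetric e.
Hypothesis b_gt0 : (0 < b)%N.
Hypothesis len_gt0 : forall i, 0 < len i.
Hypothesis ctr_in : forall v, in_star len (ctr v).
Hypothesis rad_ge0 : forall v, 0 <= rad v.
Hypothesis edgeP : forall u v, u != v ->
  (e u v <-> exists p, in_nbhd len (ctr u) (rad u) p /\ in_nbhd len (ctr v) (rad v) p).

Lemma ratr_rad_ge0 v : 0 <= ratr (rad v) :> R.
Proof. by rewrite ler0q. Qed.

Lemma noncentral_lt v : ~~ central ctr rad v -> ratr (rad v) < (ctr v).2.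
Proof. by rewrite ltNge. Qed.

Lemma center_gap_gt0 v : ~~ central ctr rad v -> 0 < center_gap ctr rad v.
Proof. by move/noncentral_lt; rewrite subr_gt0. Qed.

Lemma extends_central_clique_below u y :
    extends_central_clique e ctr rad u -> ~~ central ctr rad y ->
    (ctr y).1 = (ctr u).1 -> reach ctr rad y < center_gap ctr rad u ->
  extends_central_clique e ctr rad y.
Proof.
case/andP=> u_nc /forallP u_adj y_nc y_ray y_below.
rewrite /extends_central_clique y_nc; apply/forallP => x; apply/implyP => x_c.
have xu : x != u by apply: contraNneq u_nc => <-.
have xy : x != y by apply: contraNneq y_nc => <-.
have [[j s] [px pu]] := (edgeP xu).1 (implyP (u_adj x) x_c).
have [_ /= j_ray /andP[s_ge _]] := (in_nbhd_far (noncentral_lt u_nc)).1 pu.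
have gap_y := center_gap_gt0 y_nc; have [_ t_y_le] := ctr_in y.
rewrite /center_gap /reach in gap_y y_below s_ge.
apply/(edgeP xy); exists (j, center_gap ctr rad y); split.
  by apply: (in_nbhd_shrink x_c px); rewrite /center_gap; have := ratr_rad_ge0 y; lra.
rewrite in_nbhd_far ?noncentral_lt // /in_star /center_gap /= j_ray -y_ray.
by have := ratr_rad_ge0 y; split=> //; lra.
Qed.

Section RecenterExtender.
Variables (u : V) (q : rat).
Hypothesis u_extends : extends_central_clique e ctr rad u.
Hypothesis u_min : forall y,
  extends_central_clique e ctr rad y -> center_gap ctr rad u <= center_gap ctr rad y.
Hypothesis reach_le : reach ctr rad u <= 2 * ratr q.
Hypothesis q_small : forall v,
  ~~ central ctr rad v -> 2 * ratr q - reach ctr rad u < center_gap ctr rad v.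

Definition recentered_ctr v :=
  if v == u then ((ctr u).1, reach ctr rad u - ratr q) else ctr v.
Definition recentered_rad v := if v == u then q else rad v.

Lemma nbhd_sub_recentered p :
  in_nbhd len (ctr u) (rad u) p -> in_nbhd len ((ctr u).1, reach ctr rad u - ratr q) q p.
Proof.
have [u_nc _] := andP u_extends.
move=> /(in_nbhd_far (noncentral_lt u_nc)) [pS p_ray /andP[_ p_le]].
by apply/(in_nbhd_recenter reach_le); rewrite p_ray eqxx.
Qed.

Lemma recentered_meet_edge y p : y != u ->
    in_nbhd len ((ctr u).1, reach ctr rad u - ratr q) q p ->
    in_nbhd len (ctr y) (rad y) p ->
  e u y.
Proof.
move=> yu /(in_nbhd_recenter reach_le) [_ p_le] py.
have [u_nc /forallP u_adj] := andP u_extends.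
have [y_c|y_nc] := boolP (central ctr rad y).
  by rewrite e_sym; exact: (implyP (u_adj y)).
have [_ p_ray /andP[p_ge p_le']] := (in_nbhd_far (noncentral_lt y_nc)).1 py.
have y_ray : (ctr y).1 = (ctr u).1.
  apply/eqP; apply: contraT => ne; move: p_le; rewrite p_ray (negbTE ne) => p_le.
  by have := q_small y_nc; rewrite /center_gap; lra.
move: p_le; rewrite p_ray y_ray eqxx => p_le.
(* Otherwise T_y lies wholly below T_u, so y would be an extender with a smaller gap. *)
have u_reach : center_gap ctr rad u <= reach ctr rad y.
  rewrite leNgt; apply/negP => y_below.
  have := u_min (extends_central_clique_below u_extends y_nc y_ray y_below).
  by rewrite /center_gap /reach in y_below *; lra.
apply/edgeP; first by rewrite eq_sym.
apply: far_nbhds_meet; rewrite ?noncentral_lt //.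
all: by rewrite /center_gap /reach in u_reach p_le; lra.
Qed.

Lemma recentered_model : star_NeS_model e len recentered_ctr recentered_rad.
Proof.
have [u_nc _] := andP u_extends.
have q_lt : ratr q < (ctr u).2 by have := q_small u_nc; rewrite /center_gap /reach; lra.
have [t_ge0 t_le] := ctr_in u.
have w_lt := noncentral_lt u_nc; have w_ge0 := ratr_rad_ge0 u.
have edge_u y : y != u -> e u y <->
    exists p, in_nbhd len ((ctr u).1, reach ctr rad u - ratr q) q p /\
              in_nbhd len (ctr y) (rad y) p.
  move=> yu; split=> [|[p [pu py]]]; last exact: recentered_meet_edge pu py.
  rewrite edgeP 1?eq_sym // => -[p [pu py]].
  by exists p; split=> //; exact: nbhd_sub_recentered.
split=> // [v|v|x y].
- rewrite /recentered_ctr; case: eqP => // _.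
  by have := reach_le; rewrite /in_star /reach /=; lra.
- rewrite /recentered_rad; case: eqP => // _.
  by have := reach_le; rewrite -(ler0q R) /reach; lra.
- rewrite /recentered_ctr /recentered_rad.
  have [->|xu] := eqVneq x u; have [->|yu] := eqVneq y u => // xy.
  + exact: edge_u.
  + by rewrite e_sym edge_u //; split=> -[p [? ?]]; exists p.
  + exact: edgeP.
Qed.

Lemma recentered_noncentral_card :
  (#|[pred v | ~~ central recentered_ctr recentered_rad v]| <
   #|[pred v | ~~ central ctr rad v]|)%N.
Proof.
have u_central : central recentered_ctr recentered_rad u.
  by rewrite /central /recentered_ctr /recentered_rad eqxx /=; have := reach_le; lra.
apply: proper_card; apply/properP; split; last first.
  by exists u; rewrite !inE ?u_central // (andP u_extends).1.
apply/subsetP => v; rewrite !inE; have [->|vu] := eqVneq v u; first by rewrite u_central.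
by rewrite /central /recentered_ctr /recentered_rad (negbTE vu).
Qed.
End RecenterExtender.

Lemma ex_model_fewer_noncentral u0 : extends_central_clique e ctr rad u0 ->
  exists ctr' rad', star_NeS_model e len ctr' rad' /\
    (#|[pred v | ~~ central ctr' rad' v]| < #|[pred v | ~~ central ctr rad v]|)%N.
Proof.
move=> u0_extends; have [u u_extends u_min] := arg_minP (center_gap ctr rad) u0_extends.
have [d d_gt0 d_le] :=
  ex_pos_lower_bound (P := [pred v | ~~ central ctr rad v]) center_gap_gt0.
have /rat_in_itvoo [q] : reach ctr rad u / 2 < reach ctr rad u / 2 + d / 2 by lra.
rewrite in_itv /= => /andP[q_gt q_lt].
have reach_le : reach ctr rad u <= 2 * ratr q by lra.
have q_small v :
    ~~ central ctr rad v -> 2 * ratr q - reach ctr rad u < center_gap ctr rad v.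
  by move=> v_nc; have := d_le v v_nc; lra.
exists (recentered_ctr u q), (recentered_rad u q); split.
  exact: recentered_model u_extends u_min reach_le q_small.
exact: recentered_noncentral_card u_extends reach_le.
Qed.

Lemma central_maximal_clique : (forall v, ~~ extends_central_clique e ctr rad v) ->
  is_maximal_clique e (fun v => center_in len (ctr v) (rad v)).
Proof.
move=> no_extender.
have centralP v : center_in len (ctr v) (rad v) <-> central ctr rad v.
  by apply: center_inP => [i|]; [exact: ltW | case: (ctr_in v)].
split=> [x y x_c y_c xy | K K_clique K_sup v Kv].
  by apply/(edgeP xy); exists ((ctr x).1, 0); split; [exact: x_c | exact: y_c].
apply/centralP; move: (no_extender v); apply: contraNT => v_nc.
rewrite /extends_central_clique v_nc; apply/forallP => x; apply/implyP => x_c.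
apply: K_clique => //; first by apply: K_sup; exact/centralP.
by apply: contraNneq v_nc => <-.
Qed.

End Recentering.

Lemma ex_central_maximal_clique_model (R : realType) (V : finType) (e : rel V)
    (b : nat) (len : 'I_b -> R) ctr rad :
  symmetric e -> star_NeS_model e len ctr rad ->
  exists ctr' rad', star_NeS_model e len ctr' rad' /\
    is_maximal_clique e (fun v => center_in len (ctr' v) (rad' v)).
Proof.
move=> e_sym; have [n] := ubnP #|[pred v | ~~ central ctr rad v]|.
elim: n ctr rad => // n IH ctr rad card_lt_n model.
have [b_gt0 len_gt0 ctr_in rad_ge0 edgeP] := model.
have [u u_extends|no_extender] := pickP (extends_central_clique e ctr rad).
  have [ctr' [rad' [model' card_lt]]] :=
    ex_model_fewer_noncentral e_sym b_gt0 len_gt0 ctr_in rad_ge0 edgeP u_extends.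
  exact: IH ctr' rad' (leq_trans card_lt card_lt_n) model'.
exists ctr, rad; split=> //.
by apply: central_maximal_clique => // v; rewrite no_extender.
Qed.

Theorem claim1 (R : realType) (V : finType) (e : rel V)
  (e_sym : symmetric e) (e_irr : irreflexive e) :
  has_star_NeS_model R e ->
  exists (b : nat) (len : 'I_b -> R) (ctr : V -> 'I_b * R) (rad : V -> rat),
    star_NeS_model e len ctr rad /\
    is_maximal_clique e (fun v => center_in len (ctr v) (rad v)).
Proof.
move=> [b [len [ctr [rad model]]]].
have [ctr' [rad' [model' maximal]]] := ex_central_maximal_clique_model e_sym model.
by exists b, len, ctr', rad'.
Qed.
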